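(* Let $n\ge 2$, let $M=(\mathbf{R}^3)^n\setminus\{(p_0,\ldots,p_0)\mid p_0\in\mathbf{R}^3\}$, and let $X$ be a vector field on $M$ (with $T_pM$ identified with $(\mathbf{R}^3)^n$) whose components $X_1,\ldots,X_n\colon M\to\mathbf{R}^3$ are homogeneous quadratic polynomials in the coordinates of $p=(p_1,\ldots,p_n)$, and which is translation invariant, i.e. $X_{p+(p_0,\ldots,p_0)}=X_p$ for all $p_0\in\mathbf{R}^3$. Define $\Psi(v)=v/\sqrt{\|v\|}$ for $v\neq 0$ and $\Psi(0)=0$. Then $Y=\Psi(X)$ descends to a vector field on the quotient $N=M/\sim$: for all $p,p'\in M$ with $p\sim p'$ one has $D(\pi)_p(\Psi(X_p))=D(\pi)_{p'}(\Psi(X_{p'}))$, so that $Y_q=D(\pi)(\Psi(X_p))$ with $\pi(p)=q$ is a well-defined vector field on $N$.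
   Context: The equivalence relation $\sim$ on $M$ is generated by $p\sim\lambda p$ for $\lambda>0$ and $p\sim p+(p_0,\ldots,p_0)$ for $p_0\in\mathbf{R}^3$. The maps are $\tau\colon(\mathbf{R}^3)^n\to(\mathbf{R}^3)^n$, $\tau(p_1,\ldots,p_n)=(p_1-p_n,\ldots,p_{n-1}-p_n,0)$, $\sigma(p)=p/\|p\|$ on $(\mathbf{R}^3)^n\setminus\{0\}$, and $\pi=\sigma\circ\tau\colon M\to S^{3(n-1)-1}$, where $S^{3(n-1)-1}=\{p\in(\mathbf{R}^3)^n: p_n=0,\ \|p\|=1\}$; $N$ is identified with this sphere via $\pi$, with the round metric. $D(\pi)$ denotes the differential of $\pi$. *)

(* MathComp + MathComp-Analysis, R : realType.
   (R^3)^n is represented as n x 3 real matrices 'M[R]_(n,3): row i = p_(i+1). *)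
From HB Require Import structures.
From mathcomp Require Import all_boot all_order all_algebra.
From mathcomp Require Import all_classical all_reals all_analysis.
From Stdlib Require Import Relations.
Set Implicit Arguments. Unset Strict Implicit. Unset Printing Implicit Defensive.
Import Order.TTheory GRing.Theory Num.Theory.
Import numFieldNormedType.Exports.
Local Open Scope ring_scope.

Section Defs.
Variables (R : realType) (n : nat).
Notation V := 'M[R]_(n, 3).

Definition eucl (p : V) : R := Num.sqrt (\sum_(i < n) \sum_(k < 3) p i k ^+ 2).

Definition diagpt (p0 : 'rV[R]_3) : V := \matrix_(i < n, k < 3) p0 ord0 k.

Definition inM (p : V) : Prop := ~ (exists p0 : 'rV[R]_3, p = diagpt p0).

Definition sim_step (p q : V) : Prop :=
  inM p /\ inM q /\
  ((exists lam : R, 0 < lam /\ q = lam *: p) \/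
   (exists p0 : 'rV[R]_3, q = p + diagpt p0)).

Definition sim : V -> V -> Prop := clos_refl_sym_trans V sim_step.

(* last point p_n (for n >= 1) *)
Definition lastpt (p : V) : 'rV[R]_3 := \sum_(j < n | (j : nat) == n.-1) row j p.

Definition tau (p : V) : V := \matrix_(i < n, k < 3) (p i k - lastpt p ord0 k).

Definition sigma (p : V) : V := (eucl p)^-1 *: p.

Definition pi_map (p : V) : V := sigma (tau p).

Definition Psi (v : V) : V := if v == 0 then 0 else (Num.sqrt (eucl v))^-1 *: v.

Definition hom_quadratic (X : V -> V) : Prop :=
  forall (i : 'I_n) (k : 'I_3), exists c : 'I_n -> 'I_3 -> 'I_n -> 'I_3 -> R,
    forall p : V, inM p ->
      X p i k = \sum_(j < n) \sum_(l < 3) \sum_(j' < n) \sum_(l' < 3)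
                  c j l j' l' * (p j l * p j' l').

Definition transl_invariant (X : V -> V) : Prop :=
  forall (p : V) (p0 : 'rV[R]_3), inM p -> X (p + diagpt p0) = X p.

End Defs.

(* Both generators of ~ are symmetries of pi: pi (a p) = pi p for a > 0 and
   pi (p + (p0, ..., p0)) = pi p.  Differentiating pi \o g = pi gives
   D(pi)_p = D(pi)_(g p) \o D(g)_p, where D(g)_p is multiplication by a, resp. the
   identity.  A homogeneous quadratic X satisfies X (a p) = a^2 X p and
   Psi (a^2 v) = a Psi v, so Psi (X p) is carried along exactly like a tangent
   vector by the scaling, and it is unchanged by translations.  Hence
   D(pi)_p (Psi (X p)) is constant along each generating step of ~. *)

From HB Require Import structures.
From mathcomp Require Import all_boot all_order all_algebra.
From mathcomp Require Import all_classical all_reals all_analysis.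
From mathcomp Require Import ring.
Set Implicit Arguments. Unset Strict Implicit. Unset Printing Implicit Defensive.
Import Order.TTheory GRing.Theory Num.Theory.
Import numFieldNormedType.Exports.
Local Open Scope ring_scope.

Section InvariantDifferential.
Variables (R : realType) (U W : normedModType R).

Lemma diff_invariant (f : U -> W) (g dg : U -> U) x :
  is_diff x g dg -> differentiable f (g x) -> f \o g = f ->
  'd f x = 'd f (g x) \o dg :> (U -> W).
Proof. by move=> gx fgx fg; rewrite -{1}fg diff_comp ?diff_val //; exact: ex_diff. Qed.

Lemma diff_scale_invariant (f : U -> W) (a : R) x w :
  differentiable f (a *: x) -> (forall y, f (a *: y) = f y) ->
  'd f x w = 'd f (a *: x) (a *: w).
Proof.
move=> fax fa; have fg : f \o *:%R a = f by apply: funext => y /=; rewrite fa.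
by rewrite (diff_invariant (is_diff_scaler a x) fax fg).
Qed.

Lemma diff_transl_invariant (f : U -> W) (c x w : U) :
  differentiable f (x + c) -> (forall y, f (y + c) = f y) ->
  'd f x w = 'd f (x + c) w.
Proof.
move=> fxc fc; have fg : f \o (id + cst c) = f by apply: funext => y /=; rewrite fc.
have gx := is_diffD (is_diff_id x) (is_diff_cst c x).
by rewrite (diff_invariant gx fxc fg) /= addr0.
Qed.

End InvariantDifferential.

Section PointwiseDifferentiability.
Variables (R : realType) (V : normedModType R).

Lemma differentiable_sumr (W : normedModType R) m (f : 'I_m -> V -> W) x :
  (forall i, differentiable (f i) x) ->
  differentiable (fun y => \sum_(i < m) f i y) x.
Proof.
by move=> fx; rewrite -(fct_sumE (index_enum _) xpredT f); exact: differentiable_sum.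
Qed.

Lemma differentiable_sqrt (f : V -> R) x :
  differentiable f x -> 0 < f x -> differentiable (fun y => Num.sqrt (f y)) x.
Proof.
move=> fx fx_gt0; apply: (differentiable_comp (g := Num.sqrt)) => //.
by apply/derivable1_diffP; case: (is_derive1_sqrt fx_gt0).
Qed.

Lemma differentiable_mx a b (g : V -> 'M[R]_(a, b)) x :
  (forall i j, differentiable (fun y => g y i j) x) -> differentiable g x.
Proof.
move=> gx; have -> : g = fun y => \sum_(i < a) \sum_(j < b) g y i j *: delta_mx i j.
  by apply: funext => y; rewrite {1}(matrix_sum_delta (g y)).
by apply: differentiable_sumr => i; apply: differentiable_sumr => j;
  exact: differentiableZl.
Qed.

End PointwiseDifferentiability.

Lemma sum_sqr_mx_gt0 (R : realDomainType) a b (p : 'M[R]_(a, b)) :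
  p != 0 -> 0 < \sum_(i < a) \sum_(j < b) p i j ^+ 2.
Proof.
apply: contraNT; rewrite -leNgt => le0; apply/eqP/matrixP => i j; rewrite mxE.
have row_ge0 i' : 0 <= \sum_(j < b) p i' j ^+ 2 by apply: sumr_ge0 => *; exact: sqr_ge0.
have sum0 : \sum_(i < a) \sum_(j < b) p i j ^+ 2 = 0.
  by apply/eqP; rewrite eq_le le0 sumr_ge0.
have row0 : \sum_(j < b) p i j ^+ 2 = 0.
  exact: psumr_eq0P (fun i' _ => row_ge0 i') sum0 i isT.
have /eqP : p i j ^+ 2 = 0.
  exact: psumr_eq0P (fun j' _ => sqr_ge0 (p i j')) row0 j isT.
by rewrite sqrf_eq0 => /eqP.
Qed.

Section EuclideanNorm.
Variables (R : realType) (n : nat).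
Local Notation V := 'M[R]_(n, 3).

Lemma euclZ (a : R) (p : V) : eucl (a *: p) = `|a| * eucl p.
Proof.
rewrite /eucl -sqrtr_sqr -sqrtrM ?sqr_ge0 // mulr_sumr; congr Num.sqrt.
by apply: eq_bigr => i _; rewrite mulr_sumr; apply: eq_bigr => k _; rewrite mxE exprMn.
Qed.

Lemma eucl_gt0 (p : V) : p != 0 -> 0 < eucl p.
Proof. by move=> p0; rewrite sqrtr_gt0 sum_sqr_mx_gt0. Qed.

Lemma differentiable_eucl (p : V) : p != 0 -> differentiable (@eucl R n) p.
Proof.
move=> p0; apply: differentiable_sqrt; last exact: sum_sqr_mx_gt0.
apply: differentiable_sumr => i; apply: differentiable_sumr => k.
by apply: differentiableM; exact: differentiable_coord.
Qed.

Lemma differentiable_sigma (p : V) : p != 0 -> differentiable (@sigma R n) p.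
Proof.
move=> p0; apply: differentiable_mx => i k; rewrite /sigma.
under eq_fun do rewrite mxE.
apply: differentiableM; last exact: differentiable_coord.
by apply: differentiableV; [exact: differentiable_eucl | rewrite gt_eqF ?eucl_gt0].
Qed.

Lemma sigmaZ (a : R) (p : V) : 0 < a -> sigma (a *: p) = sigma p.
Proof.
move=> a_gt0; rewrite /sigma euclZ gtr0_norm // scalerA invfM mulrAC.
by rewrite mulVf ?mul1r // gt_eqF.
Qed.

Lemma PsiZ_sqr (a : R) (v : V) : 0 < a -> Psi (a ^+ 2 *: v) = a *: Psi v.
Proof.
move=> a_gt0; rewrite /Psi scaler_eq0 expf_eq0 /= (gt_eqF a_gt0) /=.
case: ifP => _; first by rewrite scaler0.
rewrite euclZ ger0_norm ?sqr_ge0 // sqrtrM ?sqr_ge0 // sqrtr_sqr gtr0_norm //.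
by rewrite !scalerA invfM mulrAC expr2 mulrA mulVf ?mul1r // gt_eqF.
Qed.

End EuclideanNorm.

Section Projection.
Variables (R : realType) (n : nat).
Hypothesis n_gt0 : (0 < n)%N.
Local Notation V := 'M[R]_(n, 3).

Let last_index : 'I_n := @Ordinal n n.-1 ltac:(by rewrite ltn_predL).

Lemma tauE (p : V) i k : tau p i k = p i k - p last_index k.
Proof. by rewrite !mxE /lastpt (big_pred1 last_index) ?mxE. Qed.

Lemma tauZ (a : R) (p : V) : tau (a *: p) = a *: tau p.
Proof. by apply/matrixP => i k; rewrite [RHS]mxE !tauE !mxE mulrBr. Qed.

Lemma tau_addr_diagpt (p : V) p0 : tau (p + diagpt n p0) = tau p.
Proof.
apply/matrixP => i k; rewrite !tauE !mxE.
by rewrite opprD addrACA subrr addr0.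
Qed.

Lemma tau_neq0 (p : V) : inM p -> tau p != 0.
Proof.
move=> pM; apply: contra_notN pM => /eqP tau0; exists (row last_index p).
apply/matrixP => i k; move/matrixP: tau0 => /(_ i k).
by rewrite tauE !mxE => /eqP; rewrite subr_eq0 => /eqP.
Qed.

Lemma differentiable_tau (p : V) : differentiable (@tau R n) p.
Proof.
apply: differentiable_mx => i k; under eq_fun do rewrite tauE.
by apply: differentiableB; exact: differentiable_coord.
Qed.

Lemma pi_mapZ (a : R) (p : V) : 0 < a -> pi_map (a *: p) = pi_map p.
Proof. by move=> a_gt0; rewrite /pi_map tauZ sigmaZ. Qed.

Lemma pi_map_addr_diagpt (p : V) p0 : pi_map (p + diagpt n p0) = pi_map p.
Proof. by rewrite /pi_map tau_addr_diagpt. Qed.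

Lemma differentiable_pi_map (p : V) : inM p -> differentiable (@pi_map R n) p.
Proof.
move=> pM; apply: differentiable_comp; first exact: differentiable_tau.
exact/differentiable_sigma/tau_neq0.
Qed.

End Projection.

Section DescendedField.
Variables (R : realType) (n : nat) (X : 'M[R]_(n, 3) -> 'M[R]_(n, 3)).
Hypotheses (n_gt0 : (0 < n)%N) (X_quad : hom_quadratic X)
  (X_transl : transl_invariant X).

Lemma hom_quadraticZ (a : R) p : inM p -> inM (a *: p) -> X (a *: p) = a ^+ 2 *: X p.
Proof.
move=> pM apM; apply/matrixP => i k; have [c Xc] := X_quad i k.
rewrite (Xc _ apM) mxE (Xc _ pM) mulr_sumr; apply: eq_bigr => j _.
rewrite mulr_sumr; apply: eq_bigr => l _; rewrite mulr_sumr; apply: eq_bigr => j' _.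
by rewrite mulr_sumr; apply: eq_bigr => l' _; rewrite !mxE; ring.
Qed.

Lemma pushforward_Psi_step p p' : sim_step p p' ->
  'd (@pi_map R n) p (Psi (X p)) = 'd (@pi_map R n) p' (Psi (X p')).
Proof.
case=> pM [p'M [[a [a_gt0 p'E]] | [p0 p'E]]]; subst p'.
- have -> : Psi (X (a *: p)) = a *: Psi (X p).
    by rewrite (hom_quadraticZ pM p'M) PsiZ_sqr.
  apply: diff_scale_invariant => [|y]; first exact: (differentiable_pi_map n_gt0 p'M).
  exact: (pi_mapZ n_gt0 y a_gt0).
- rewrite (X_transl p0 pM); apply: diff_transl_invariant => [|y].
    exact: (differentiable_pi_map n_gt0 p'M).
  exact: (pi_map_addr_diagpt n_gt0 y p0).
Qed.

End DescendedField.

Theorem lemma2 (R : realType) (n : nat) (hn : (2 <= n)%N)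
  (X : 'M[R]_(n, 3) -> 'M[R]_(n, 3)) :
  hom_quadratic X -> transl_invariant X ->
  forall p p' : 'M[R]_(n, 3), inM p -> inM p' -> sim p p' ->
    'd (@pi_map R n) p (Psi (X p)) = 'd (@pi_map R n) p' (Psi (X p')).
Proof.
move=> X_quad X_transl p p' _ _.
have n_gt0 : (0 < n)%N by apply: leq_trans hn.
elim=> [q q' | q | q q' _ IH | q q' q'' _ IH _ IH'].
- exact: pushforward_Psi_step.
- by [].
- exact: esym IH.
- exact: etrans IH IH'.
Qed.
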